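(* Let $b=(b_1,\ldots,b_n)$, $\alpha=(\alpha_1,\ldots,\alpha_n)$ and $\beta=(\beta_1,\ldots,\beta_n)$ be vectors of nonnegative integers, and let $d$ be an integer, such that $\alpha_1\le\alpha_2\le\cdots\le\alpha_n=d$, $\beta_1\le\beta_2\le\cdots\le\beta_n=d$, $\alpha_i\le\beta_i$ for all $i$, $\alpha_1=0$ and $\beta_1=b_1$. Let $I\subseteq S=K[x_1,\ldots,x_n]$ be the PLP-polymatroidal ideal of type $(\mathbf{0},b\mid\alpha,\beta)$, i.e. the ideal generated by all monomials $x^u=x_1^{u_1}\cdots x_n^{u_n}$ with $u\in\mathbb{Z}_{\ge0}^n$ satisfying $0\le u_i\le b_i$ and $\alpha_i\le u_1+\cdots+u_i\le\beta_i$ for $i=1,\ldots,n$. Then $\mathrm{Soc}^*(I)$ is generated, as a module over the Rees ring $R(I)$, by homogeneous elements of degree $<n$, and $\mathrm{Soc}(I)$ is generated, as an $\mathcal{F}(I)$-module, by homogeneous elements of degree $<n$.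
   Context: $K$ is a field and $\mathfrak{m}=(x_1,\ldots,x_n)$. The ideal $I$ is polymatroidal, generated in degree $d$, and all its powers $I^m$ are generated in degree $md$ and have linear resolutions. For each $m\ge1$, $\mathrm{soc}(I^m)$ denotes the ideal generated by all monomials $u$ of degree $md-1$ with $x_iu\in I^m$ for all $i$; one has $(I^m:\mathfrak{m})=I^m+\mathrm{soc}(I^m)$. The Rees ring is $R(I)=\bigoplus_{m\ge0}I^m$, and $\mathrm{Soc}^*(I)=\bigoplus_{m\ge1}\mathrm{soc}(I^m)$, graded with $\mathrm{soc}(I^m)$ in degree $m$, is a graded $R(I)$-module, elements of $I^r$ mapping $\mathrm{soc}(I^m)$ into $\mathrm{soc}(I^{m+r})$. The fiber cone is $\mathcal{F}(I)=\bigoplus_{m\ge0}I^m/\mathfrak{m}I^m$, and $\mathrm{Soc}(I)=\bigoplus_{m\ge0}(I^m:\mathfrak{m})/I^m$ is a graded $\mathcal{F}(I)$-module with $(I^m:\mathfrak{m})/I^m$ in degree $m$. *)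

From mathcomp Require Import all_boot all_algebra.
From mathcomp Require Import mpoly.
Set Implicit Arguments. Unset Strict Implicit. Unset Printing Implicit Defensive.
Import GRing.Theory.
Local Open Scope ring_scope.

(* Ideals of S = K[x_1..x_n] = {mpoly K[n]} are represented as predicates
   (subsets) of S.  All ideals below are built with [ideal_span]. *)
Section Ideals.
Variables (K : fieldType) (n : nat).
Local Notation S := {mpoly K[n]}.

Definition ideal_span (G : S -> Prop) : S -> Prop :=
  fun f => exists s : seq (S * S),
    (forall p, p \in s -> G p.2) /\ f = \sum_(p <- s) p.1 * p.2.

Definition idealM (A B : S -> Prop) : S -> Prop :=
  ideal_span (fun f => exists a c, A a /\ B c /\ f = a * c).

Fixpoint ideal_pow (I : S -> Prop) (m : nat) : S -> Prop :=
  match m with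
  | 0 => fun _ => True
  | m'.+1 => idealM (ideal_pow I m') I
  end.

Definition colon_max (J : S -> Prop) : S -> Prop :=
  fun f => forall i : 'I_n, J ('X_i * f).

(* soc(I^m): generated by the monomials u of degree m*d - 1 with
   x_i u in I^m for all i  (degree condition written as deg u + 1 = m d). *)
Definition soc (I : S -> Prop) (d m : nat) : S -> Prop :=
  ideal_span (fun f => exists u : 'X_{1..n},
    (mdeg u).+1 = (m * d)%N /\ (forall i : 'I_n, ideal_pow I m ('X_i * 'X_[u]))
    /\ f = 'X_[u]).

(* Soc^*(I) = (+)_{m>=1} soc(I^m) is generated as an R(I)-module by homogeneous
   elements of degree < N: the degree-m component of the submodule generated by
   the components of degree k < N is  sum_{1<=k<N, k<=m} I^(m-k) soc(I^k),
   and it must equal soc(I^m) for every m (trivially so for m < N). *)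
Definition Soc_star_gen_lt (I : S -> Prop) (d N : nat) : Prop :=
  forall m : nat, (N <= m)%N -> forall f, soc I d m f ->
    ideal_span (fun g => exists k : nat, [/\ (1 <= k)%N, (k < N)%N &
       idealM (ideal_pow I (m - k)) (soc I d k) g]) f.

(* Soc(I) = (+)_{m>=0} (I^m : m)/I^m is generated as an F(I)-module by homogeneous
   elements of degree < N: for every m >= N,
   (I^m : m) = I^m + sum_{0<=k<N} I^(m-k) (I^k : m). *)
Definition Soc_gen_lt (I : S -> Prop) (N : nat) : Prop :=
  forall m : nat, (N <= m)%N -> forall f, colon_max (ideal_pow I m) f ->
    ideal_span (fun g => ideal_pow I m g \/ exists k : nat, (k < N)%N /\
       idealM (ideal_pow I (m - k)) (colon_max (ideal_pow I k)) g) f.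

(* partial sum u_1 + ... + u_i (i is 0-indexed here). *)
Definition psum (u : 'I_n -> nat) (i : 'I_n) : nat :=
  (\sum_(j < n | (j <= i)%N) u j)%N.

Definition plp_ideal (b alpha beta : 'I_n -> nat) : S -> Prop :=
  ideal_span (fun f => exists u : 'X_{1..n},
    [/\ (forall i, u i <= b i)%N,
        (forall i, alpha i <= psum u i <= beta i)%N & f = 'X_[u]]).
End Ideals.

From mathcomp Require Import all_boot all_algebra.
From mathcomp Require Import mpoly.
From mathcomp Require Import zify.
Set Implicit Arguments. Unset Strict Implicit. Unset Printing Implicit Defensive.
Import GRing.Theory.

(* The minimal generators of I^m are the x^u whose exponent satisfies the
   constraints defining I scaled by m; rounding the partial sums S_t of u to
   floor((S_t + r)/m) splits u into a generator of I and one of I^(m-1).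
   If x^u is a socle monomial of I^m, then x = u + e_n satisfies the scaled
   constraints with every inequality strict except at the last variable.  When
   m >= n, at most n - 1 of the m shifts r put one of S_0, ..., S_(n-2) on a
   multiple of m; rounding with any other shift peels off a generator of I and
   keeps the inequalities strict for m - 1.  Iterating down to n - 1 writes x^u
   as a generator of I^(m-n+1) times a socle monomial of I^(n-1).  For Soc(I),
   a monomial of (I^m : m) of degree at least m d already lies in I^m by an
   exchange argument, and any other one is a socle monomial. *)

Section IdealSpan.
Variables (K : fieldType) (n : nat).
Local Notation S := {mpoly K[n]}.
Implicit Types (G H : S -> Prop) (f g : S).

Lemma ideal_span_gen G g : G g -> ideal_span G g.
Proof.
move=> Gg; exists [:: (1%R, g)]; split=> [p|]; last by rewrite big_seq1 mul1r.
by rewrite inE => /eqP ->.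
Qed.

Lemma ideal_span0 G : ideal_span G 0%R.
Proof. by exists [::]; rewrite big_nil. Qed.

Lemma ideal_spanD G f g : ideal_span G f -> ideal_span G g -> ideal_span G (f + g)%R.
Proof.
move=> [s [sG ->]] [t [tG ->]]; exists (s ++ t); split; last by rewrite big_cat.
by move=> p; rewrite mem_cat => /orP[/sG|/tG].
Qed.

Lemma ideal_spanMl G q f : ideal_span G f -> ideal_span G (q * f)%R.
Proof.
move=> [s [sG ->]]; exists [seq (q * p.1, p.2)%R | p <- s]; split.
  by move=> p /mapP[p' /sG ? ->].
by rewrite big_map mulr_sumr; apply: eq_bigr => p _; rewrite mulrA.
Qed.

Lemma ideal_span_sum G (I : eqType) (r : seq I) (F : I -> S) :
  (forall i, i \in r -> ideal_span G (F i)) -> ideal_span G (\sum_(i <- r) F i)%R.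
Proof.
elim: r => [|x r IHr] spanF; first by rewrite big_nil; apply: ideal_span0.
rewrite big_cons; apply: ideal_spanD; first by apply: spanF; rewrite inE eqxx.
by apply: IHr => i ri; apply: spanF; rewrite inE ri orbT.
Qed.

Lemma ideal_span_trans G H f :
  (forall g, G g -> ideal_span H g) -> ideal_span G f -> ideal_span H f.
Proof. by move=> GH [s [sG ->]]; apply: ideal_span_sum => p /sG /GH; apply: ideal_spanMl. Qed.

Lemma ideal_span_msupp G (Q : 'X_{1..n} -> Prop) f :
  (forall a a', Q a -> (a <= a')%MM -> Q a') ->
  (forall g, G g -> forall a, a \in msupp g -> Q a) ->
  ideal_span G f -> forall a, a \in msupp f -> Q a.
Proof.
move=> Q_up QG [s [sG ->]] a /msupp_sum_le /flattenP[l /mapP[p ps ->]] /msuppM_le.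
move=> /allpairsP[[a1 a2] /= [_ a2_supp ->]]; rewrite filter_predT in ps.
exact: Q_up (QG _ (sG _ ps) _ a2_supp) (lem_addl _ _).
Qed.

Lemma ideal_powMl (I : S -> Prop) m q f : ideal_pow I m f -> ideal_pow I m (q * f)%R.
Proof. by case: m => [//|m] /=; apply: ideal_spanMl. Qed.

Lemma ideal_powSM (I : S -> Prop) m f g :
  ideal_pow I m f -> I g -> ideal_pow I m.+1 (f * g)%R.
Proof. by move=> If Ig; apply: ideal_span_gen; exists f, g. Qed.

End IdealSpan.

Lemma leq_subn_divn M E c : E <= M * c -> E - (M - 1) * c <= E %/ M.
Proof.
case: M => [|M] leEc; first by rewrite divn0; lia.
have := ltn_ceil E (ltn0Sn M); have := leq_divM E M.+1.
move: (E %/ M.+1) => q; case: (leqP c q); nia.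
Qed.

Section ShiftDiv.
Variables (M r : nat).
Hypothesis lt_r_M : r < M.

Definition shift_div X := (X + r) %/ M.

Let M_gt0 : 0 < M. Proof. exact: leq_ltn_trans lt_r_M. Qed.

Lemma shift_div_spec X : M * shift_div X <= X + r < M * (shift_div X).+1.
Proof. by apply/andP; split; rewrite mulnC; [apply: leq_divM | apply: ltn_ceil]. Qed.

Lemma leq_shift_div A B : A <= B -> shift_div A <= shift_div B.
Proof. by move=> leAB; apply: leq_div2r; rewrite leq_add2r. Qed.

Lemma shift_div_bounds a c X : M * a <= X <= M * c -> a <= shift_div X <= c.
Proof. by have := shift_div_spec X; move: (shift_div X) => q; nia. Qed.

Lemma shift_div_leq X : shift_div X <= X.
Proof. by have := shift_div_spec X; move: (shift_div X) => q; nia. Qed.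

Lemma shift_div0 : shift_div 0 = 0.
Proof. by rewrite /shift_div divn_small. Qed.

Lemma shift_divD A B : A <= B ->
  shift_div B = shift_div A + ((A + r) %% M + (B - A)) %/ M.
Proof.
move=> leAB; rewrite /shift_div -divnMDl //.
by congr (_ %/ _); rewrite addnA -divn_eq; lia.
Qed.

Lemma shift_div_subn_leq c A B : A <= B -> B - A <= M * c ->
  shift_div B - shift_div A <= c.
Proof.
move=> leAB leDc; have := shift_div_spec A; have := shift_div_spec B.
move: (shift_div A) (shift_div B) => qa qb; nia.
Qed.

Lemma shift_div_subn A B : A <= B -> shift_div B - shift_div A <= B - A.
Proof. by move=> leAB; apply: shift_div_subn_leq => //; rewrite leq_pmull. Qed.

Lemma shift_div_rest_bounds a c X : M * a <= X <= M * c ->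
  (M - 1) * a <= X - shift_div X <= (M - 1) * c.
Proof. by have := shift_div_spec X; move: (shift_div X) => q; nia. Qed.

Lemma shift_div_rest_lt c X : 0 < r -> X < M * c -> X - shift_div X < (M - 1) * c.
Proof.
move=> r_gt0 ltXc; have := leq_subn_divn ltXc.
have : X.+1 %/ M <= shift_div X by apply: leq_div2r; lia.
have := shift_div_leq X; lia.
Qed.

Lemma shift_div_rest_subn_leq c A B : A <= B -> B - A <= M * c ->
  (B - shift_div B) - (A - shift_div A) <= (M - 1) * c.
Proof.
move=> leAB leDc; have := leq_subn_divn leDc; have := shift_divD leAB.
have : (B - A) %/ M <= ((A + r) %% M + (B - A)) %/ M by apply/leq_div2r/leq_addl.
have := shift_div_leq A; have := shift_div_leq B.
move: ((M - 1) * c) (shift_div A) (shift_div B) ((B - A) %/ M).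
move: (((A + r) %% M + (B - A)) %/ M); lia.
Qed.

Lemma shift_div_rest_subn_lt c A B : A <= B -> B - A < M * c -> (A + r) %% M != 0 ->
  (B - shift_div B) - (A - shift_div A) < (M - 1) * c.
Proof.
move=> leAB ltDc modA; have := leq_subn_divn ltDc; have := shift_divD leAB.
have := shift_div_subn leAB.
have : (B - A).+1 %/ M <= ((A + r) %% M + (B - A)) %/ M by apply: leq_div2r; lia.
have := shift_div_leq A; have := shift_div_leq B.
move: ((M - 1) * c) (shift_div A) (shift_div B) ((B - A).+1 %/ M).
move: (((A + r) %% M + (B - A)) %/ M); lia.
Qed.

End ShiftDiv.

Lemma modn_addr_eq0 M s r : r < M -> (s + r) %% M = 0 -> r = (M - s %% M) %% M.
Proof.
move=> ltrM; have M_gt0 : 0 < M by lia.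
rewrite -modnDml => /eqP; rewrite -/(dvdn M _).
have := ltn_pmod s M_gt0; move: (s %% M) => s' lts' /dvdnP[q srE].
have [q0|q_gt0] := posnP q; first by subst q; rewrite (_ : s' = 0) ?subn0 ?modnn; lia.
have q1 : q = 1 by nia.
by subst q; rewrite modn_small; lia.
Qed.

Lemma exists_shift_avoiding M k (S : nat -> nat) : k < M ->
  exists2 r, r < M & forall t, t < k -> (S t + r) %% M != 0.
Proof.
move=> ltkM; have M_gt0 : 0 < M by lia.
pose bad (t : 'I_k) : 'I_M := Ordinal (ltn_pmod (M - S t %% M) M_gt0).
have [r r_good] : exists r : 'I_M, r \notin codom bad.
  case: (pickP (fun r : 'I_M => r \notin codom bad)) => [r ? | all_bad]; first by exists r.
  suff : M <= k by lia.
  rewrite -[M]card_ord -[k]card_ord -(size_codom bad).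
  apply: (leq_trans _ (card_size (codom bad))); apply/subset_leq_card/subsetP => s _.
  exact/negbFE/all_bad.
exists r => // t ltk; apply/eqP => /(modn_addr_eq0 (ltn_ord r)) rE.
by apply: (negP r_good); apply/codomP; exists (Ordinal ltk); apply: val_inj.
Qed.

Section MultinomialPartialSums.
Variable n : nat.
Implicit Types (u v x : 'X_{1..n}) (F G : nat -> nat).

Definition prefix_sum u t := \sum_(s < t) nth 0 u s.

Lemma prefix_sumS u t : prefix_sum u t.+1 = prefix_sum u t + nth 0 u t.
Proof. by rewrite /prefix_sum big_ord_recr. Qed.

Lemma prefix_sum0 u : prefix_sum u 0 = 0.
Proof. by rewrite /prefix_sum big_ord0. Qed.

Lemma leq_prefix_sumS u t : prefix_sum u t <= prefix_sum u t.+1.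
Proof. by rewrite prefix_sumS leq_addr. Qed.

Lemma prefix_sumS_subn u (i : 'I_n) : prefix_sum u i.+1 - prefix_sum u i = u i.
Proof. by rewrite prefix_sumS addKn (mnm_nth 0). Qed.

Lemma psum_prefix_sum u (i : 'I_n) : psum u i = prefix_sum u i.+1.
Proof.
rewrite /prefix_sum (big_ord_widen n (fun s => nth 0 u s)) //.
by apply: eq_big => [j|j _]; rewrite ?ltnS // (mnm_nth 0).
Qed.

Lemma psum_last u (i : 'I_n) : i.+1 = n -> psum u i = mdeg u.
Proof.
move=> iE; rewrite psum_prefix_sum iE mdegE /prefix_sum.
by apply: eq_bigr => j _; rewrite (mnm_nth 0).
Qed.

Lemma psum_add_tail u (i : 'I_n) : psum u i + \sum_(k < n | i < k) u k = mdeg u.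
Proof.
rewrite mdegE [RHS](bigID (fun k : 'I_n => k <= i)) /=.
by congr (_ + _); apply: eq_bigl => k; rewrite ltnNge.
Qed.

Lemma psum_succ u (i j : 'I_n) : j = i.+1 :> nat -> psum u j = psum u i + u j.
Proof. by move=> jE; rewrite !psum_prefix_sum jE prefix_sumS (mnm_nth 0) jE. Qed.

Lemma psum_lt_of_tail u v (i l : 'I_n) : mdeg u = mdeg v -> i < l ->
  (forall k : 'I_n, i < k -> v k <= u k) -> v l < u l -> psum u i < psum v i.
Proof.
move=> deg_uv lt_il le_vu lt_vul.
suff : \sum_(k < n | i < k) v k < \sum_(k < n | i < k) u k.
  by have := psum_add_tail u i; have := psum_add_tail v i; lia.
rewrite (bigD1 l lt_il) [X in _ < X](bigD1 l lt_il) /= -addSn.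
by apply: leq_add lt_vul _; apply: leq_sum => k /andP[lt_ik _]; apply: le_vu.
Qed.

Lemma psumD u v i : psum (u + v)%MM i = psum u i + psum v i.
Proof. by rewrite /psum -big_split; apply: eq_bigr => j _; rewrite mnmDE. Qed.

Lemma psum1 (q i : 'I_n) : psum U_(q)%MM i = (q <= i).
Proof.
rewrite /psum (eq_bigr (fun j : 'I_n => nat_of_bool (j == q))) => [|j _]; last first.
  by rewrite mnm1E eq_sym.
case: (leqP q i) => [leqi|ltiq].
  by rewrite (bigD1 q) //= eqxx big1 // => j /andP[_ /negbTE ->].
by rewrite big1 // => j leji; case: eqP => // jq; move: leji ltiq; rewrite jq; lia.
Qed.

Lemma lepm_add u1 u2 v1 v2 : (u1 <= v1)%MM -> (u2 <= v2)%MM -> (u1 + u2 <= v1 + v2)%MM.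
Proof. by move=> /mnm_lepP le1 /mnm_lepP le2; apply/mnm_lepP => i; rewrite !mnmDE leq_add. Qed.

Lemma mdeg_lepm u v : (u <= v)%MM -> mdeg u <= mdeg v.
Proof. by move=> leuv; rewrite -(submK leuv) mdegD leq_addl. Qed.

Lemma lepm_mdeg_eq u v : (u <= v)%MM -> mdeg u = mdeg v -> u = v.
Proof.
move=> leuv deg_uv; rewrite -(submK leuv); suff /eqP -> : (v - u)%MM == 0%MM by rewrite add0m.
by rewrite -mdeg_eq0; have := mdegD (v - u)%MM u; rewrite submK //; lia.
Qed.

Lemma lepm_addU_nle u v (l : 'I_n) :
  (u <= v + U_(l))%MM -> ~~ (u <= v)%MM -> u l = (v l).+1.
Proof.
move=> /mnm_lepP le_uv not_le; have := le_uv l; rewrite mnmDE mnm1E eqxx addn1.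
rewrite leq_eqVlt => /orP[/eqP //|]; rewrite ltnS => le_l.
case/negP: not_le; apply/mnm_lepP => i; have := le_uv i; rewrite mnmDE mnm1E.
by have [<-|_] := eqVneq l i; rewrite ?addn0.
Qed.

Definition mnm_of_prefix F : 'X_{1..n} := [multinom F i.+1 - F i | i < n].

Lemma mnm_of_prefixE F (i : 'I_n) : mnm_of_prefix F i = F i.+1 - F i.
Proof. by rewrite mnmE. Qed.

Lemma prefix_sum_of_prefix F : F 0 = 0 -> (forall t, F t <= F t.+1) ->
  forall t, t <= n -> prefix_sum (mnm_of_prefix F) t = F t.
Proof.
move=> F0 F_mono; elim=> [|t IHt] lt_tn; first by rewrite prefix_sum0.
rewrite prefix_sumS IHt ?(ltnW lt_tn) //.
have := mnm_of_prefixE F (Ordinal lt_tn); rewrite (mnm_nth 0) /= => ->.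
by have := F_mono t; lia.
Qed.

End MultinomialPartialSums.

Section RoundingSplit.
Variables (n M r : nat) (x : 'X_{1..n}).
Hypothesis lt_r_M : r < M.

Definition round_part : 'X_{1..n} :=
  mnm_of_prefix n (fun t => shift_div M r (prefix_sum x t)).
Definition round_rest : 'X_{1..n} :=
  mnm_of_prefix n (fun t => prefix_sum x t - shift_div M r (prefix_sum x t)).

Let round_part_mono t :
  shift_div M r (prefix_sum x t) <= shift_div M r (prefix_sum x t.+1).
Proof. exact/leq_shift_div/leq_prefix_sumS. Qed.

Let round_rest_mono t : prefix_sum x t - shift_div M r (prefix_sum x t) <=
  prefix_sum x t.+1 - shift_div M r (prefix_sum x t.+1).
Proof.
have := shift_div_subn lt_r_M (leq_prefix_sumS x t); have := leq_prefix_sumS x t.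
have := shift_div_leq lt_r_M (prefix_sum x t); have := round_part_mono t; lia.
Qed.

Lemma round_partE (i : 'I_n) :
  round_part i = shift_div M r (prefix_sum x i.+1) - shift_div M r (prefix_sum x i).
Proof. exact: mnm_of_prefixE. Qed.

Lemma round_restE (i : 'I_n) : round_rest i =
  (prefix_sum x i.+1 - shift_div M r (prefix_sum x i.+1))
  - (prefix_sum x i - shift_div M r (prefix_sum x i)).
Proof. exact: mnm_of_prefixE. Qed.

Lemma round_split : x = (round_part + round_rest)%MM.
Proof.
apply/mnmP => i; rewrite mnmDE round_partE round_restE -prefix_sumS_subn.
have := round_part_mono i; have := round_rest_mono i; have := leq_prefix_sumS x i.
have := shift_div_leq lt_r_M (prefix_sum x i).
have := shift_div_leq lt_r_M (prefix_sum x i.+1); lia.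
Qed.

Lemma psum_round_part (i : 'I_n) : psum round_part i = shift_div M r (prefix_sum x i.+1).
Proof.
by rewrite psum_prefix_sum prefix_sum_of_prefix // prefix_sum0 shift_div0.
Qed.

Lemma psum_round_rest (i : 'I_n) :
  psum round_rest i = prefix_sum x i.+1 - shift_div M r (prefix_sum x i.+1).
Proof. by rewrite psum_prefix_sum prefix_sum_of_prefix // prefix_sum0. Qed.

End RoundingSplit.

Section PlpExponents.
Variables (n : nat) (b alpha beta : 'I_n -> nat).
Implicit Types (u v w x y z : 'X_{1..n}).

(* Exponents of the minimal generators of I^m, see plp_pow_monomial and
   plp_pow_msupp. *)
Definition plp_exp m x := (forall i, x i <= m * b i) /\
  (forall i, m * alpha i <= psum x i <= m * beta i).

(* Satisfied by x = u + e_n exactly when x^u is a socle monomial of I^m,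
   see plp_socP. *)
Definition plp_tight m x := plp_exp m x /\
  forall i : 'I_n, i.+1 < n -> x i < m * b i /\ psum x i < m * beta i.

Lemma plp_exp0 : plp_exp 0 0%MM.
Proof. by split=> i; rewrite ?mnm0E // /psum big1 // => j _; rewrite mnm0E. Qed.

Lemma plp_expD m k u v : plp_exp m u -> plp_exp k v -> plp_exp (m + k) (u + v)%MM.
Proof.
move=> [u_le u_psum] [v_le v_psum]; split=> i; rewrite ?mnmDE ?psumD mulnDl.
  by have := u_le i; have := v_le i; lia.
by have := u_psum i; have := v_psum i; lia.
Qed.

Lemma plp_exp_round_split m r x : r < m.+1 -> plp_exp m.+1 x ->
  plp_exp 1 (round_part m.+1 r x) /\ plp_exp m (round_rest m.+1 r x).
Proof.
move=> ltr [x_le x_psum].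
have x_step (i : 'I_n) : prefix_sum x i.+1 - prefix_sum x i <= m.+1 * b i.
  by rewrite prefix_sumS_subn.
have x_psum' (i : 'I_n) : m.+1 * alpha i <= prefix_sum x i.+1 <= m.+1 * beta i.
  by rewrite -psum_prefix_sum.
split; split=> i.
- by rewrite round_partE mul1n; apply: shift_div_subn_leq (leq_prefix_sumS _ _) (x_step i).
- by rewrite psum_round_part // !mul1n; apply: shift_div_bounds.
- have := shift_div_rest_subn_leq ltr (leq_prefix_sumS _ _) (x_step i).
  by rewrite round_restE subn1.
- by have := shift_div_rest_bounds ltr (x_psum' i); rewrite psum_round_rest // subn1.
Qed.

Lemma plp_exp_succ_split m x : plp_exp m.+1 x ->
  exists y z, [/\ x = (y + z)%MM, plp_exp 1 y & plp_exp m z].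
Proof.
move=> x_exp; have [y_exp z_exp] := plp_exp_round_split (ltn0Sn m) x_exp.
by exists (round_part m.+1 0 x), (round_rest m.+1 0 x); split=> //; apply: round_split.
Qed.

(* No partial sum sits on a multiple of m+1 after the shift, so the rounding
   leaves some slack in every strict inequality. *)
Lemma plp_tight_round_rest m r x : r < m.+1 -> plp_tight m.+1 x ->
  (forall i : 'I_n, i.+1 < n -> (prefix_sum x i + r) %% m.+1 != 0) ->
  plp_tight m (round_rest m.+1 r x).
Proof.
move=> ltr [x_exp x_strict] avoid.
split=> [|i lti]; first by have [] := plp_exp_round_split ltr x_exp.
have [x_lt psum_lt] := x_strict i lti.
have r_gt0 : 0 < r.
  have := avoid (Ordinal (ltn_trans (ltn0Sn i) lti)) (leq_ltn_trans (ltn0Sn i) lti).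
  by rewrite prefix_sum0 add0n lt0n; apply: contraNneq => ->; rewrite mod0n.
split.
- rewrite -prefix_sumS_subn in x_lt.
  have := shift_div_rest_subn_lt ltr (leq_prefix_sumS _ _) x_lt (avoid i lti).
  by rewrite round_restE subn1.
- rewrite psum_prefix_sum in psum_lt.
  by have := shift_div_rest_lt ltr r_gt0 psum_lt; rewrite psum_round_rest // subn1.
Qed.

Lemma plp_tight_peel m x : n <= m.+1 -> plp_tight m.+1 x ->
  exists v y, [/\ x = (v + y)%MM, plp_exp 1 v & plp_tight m y].
Proof.
move=> le_n_m x_tight; have ltnm : n.-1 < m.+1 by lia.
have [r ltr avoid] := exists_shift_avoiding (prefix_sum x) ltnm.
exists (round_part m.+1 r x), (round_rest m.+1 r x); split.
- exact: round_split.
- by have [] := plp_exp_round_split ltr x_tight.1.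
- by apply: plp_tight_round_rest => // i lti; apply: avoid; lia.
Qed.

Lemma plp_tight_split k m x : n <= m.+1 -> plp_tight (m + k) x ->
  exists v y, [/\ x = (v + y)%MM, plp_exp k v & plp_tight m y].
Proof.
move=> le_n_m; elim: k x => [|k IHk] x x_tight.
  by exists 0%MM, x; rewrite add0m -[m]addn0; split=> //; apply: plp_exp0.
rewrite addnS in x_tight; have le_n_mk : n <= (m + k).+1 by lia.
have [v1 [y1 [-> v1_exp /IHk[v2 [y [-> v2_exp y_tight]]]]]] := plp_tight_peel le_n_mk x_tight.
exists (v1 + v2)%MM, y; split=> //; first by rewrite addmA.
by rewrite -add1n; apply: plp_expD.
Qed.

Section LastVariable.
Variable last : 'I_n.
Hypothesis lastE : last.+1 = n.

Lemma leq_last (i : 'I_n) : i <= last.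
Proof. by rewrite -ltnS lastE. Qed.

Lemma lt_lastE (i : 'I_n) : (i.+1 < n) = (i != last).
Proof. by have := leq_last i; rewrite -val_eqE /=; case: eqP; lia. Qed.

Lemma last_leqE (i : 'I_n) : (last <= i) = (last == i).
Proof. by have := leq_last i; rewrite -val_eqE /=; case: eqP; lia. Qed.

Lemma plp_socP m u :
  (forall q, plp_exp m (u + U_(q))%MM) <-> plp_tight m (u + U_(last))%MM.
Proof.
have coordE q i : (u + U_(q))%MM i = u i + (q == i) by rewrite mnmDE mnm1E.
have psumE q i : psum (u + U_(q))%MM i = psum u i + (q <= i) by rewrite psumD psum1.
split=> [soc_u | [[x_le x_psum] x_strict] q].
  split=> [|i]; first exact: soc_u.
  rewrite lt_lastE eq_sym => ne_li; have [le_i psum_i] := soc_u i.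
  have := le_i i; have /andP[_] := psum_i i.
  by rewrite !coordE !psumE eqxx leqnn last_leqE (negbTE ne_li); lia.
split=> i; rewrite ?coordE ?psumE; have [->|ne_il] := eqVneq i last.
- by have := x_le last; rewrite coordE eqxx; case: (q == last); lia.
- have lti : i.+1 < n by rewrite lt_lastE.
  have ne_li : last != i by rewrite eq_sym.
  have [+ _] := x_strict i lti; rewrite coordE (negbTE ne_li).
  by case: (q == i); lia.
- by have := x_psum last; rewrite psumE leqnn leq_last; lia.
- have lti : i.+1 < n by rewrite lt_lastE.
  have ne_li : last != i by rewrite eq_sym.
  have [_ +] := x_strict i lti; have := x_psum i.
  rewrite !psumE last_leqE (negbTE ne_li).
  by case: (q <= i); lia.
Qed.

Lemma plp_exp_exchange m x y z (j : 'I_n) : plp_exp m x -> plp_exp m z ->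
  (y + U_(last) = x + U_(j))%MM -> y j <= m * b j ->
  (forall i : 'I_n, j <= i -> i != last -> psum x i < psum z i) -> plp_exp m y.
Proof.
move=> [x_le x_psum] [_ z_psum] yE y_j psum_lt.
have coordE (i : 'I_n) : y i + (last == i) = x i + (j == i).
  by move/mnmP/(_ i): yE; rewrite !mnmDE !mnm1E.
have psumE (i : 'I_n) : psum y i + (last <= i) = psum x i + (j <= i).
  by have := congr1 (fun u : 'X_{1..n} => psum u i) yE; rewrite !psumD !psum1.
split=> i.
  have [<-//|ne_ji] := eqVneq j i.
  by have := coordE i; have := x_le i; rewrite (negbTE ne_ji); case: (last == i); lia.
have := psumE i; have := x_psum i; have [->|ne_il] := eqVneq i last.
  by rewrite leqnn leq_last; lia.
rewrite last_leqE eq_sym (negbTE ne_il).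
have [le_ji|] := leqP j i; last by lia.
by have := psum_lt i le_ji ne_il; have := z_psum i; lia.
Qed.

Section Degree.
Variable d : nat.
Hypothesis alpha_last : alpha last = d.
Hypothesis beta_last : beta last = d.

Lemma plp_exp_mdeg m x : plp_exp m x -> mdeg x = m * d.
Proof.
move=> [_ /(_ last)]; rewrite psum_last // alpha_last beta_last => /andP[ge le].
by apply/eqP; rewrite eqn_leq ge le.
Qed.

Lemma plp_soc_n_gt1 m u : (forall i : 'I_n, i = 0 :> nat -> alpha i = 0) ->
  (forall q, plp_exp m (u + U_(q))%MM) -> 1 < n.
Proof.
move=> alpha_first soc_u; have := plp_exp_mdeg (soc_u last).
rewrite mdegD mdeg1 addn1; case: (ltnP 1 n) => // le_n1.
by rewrite -alpha_last alpha_first ?muln0 //; lia.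
Qed.

Hypothesis beta_mono : forall i j : 'I_n, i <= j -> beta i <= beta j.

Lemma plp_tight_last_gt0 m y : 1 < n -> plp_tight m y -> 0 < y last.
Proof.
move=> n_gt1 [[_ y_psum] y_strict]; have lt_prev : n.-2 < n by lia.
pose prev : 'I_n := Ordinal lt_prev; have lt_prev_n : prev.+1 < n by rewrite /=; lia.
have [_ psum_prev] := y_strict prev lt_prev_n.
have := leq_mul (leqnn m) (beta_mono (leq_last prev)).
have /andP[+ _] := y_psum last.
rewrite (@psum_succ _ y prev) /=; last by lia.
by rewrite alpha_last beta_last; lia.
Qed.

Lemma plp_soc_split m u : 1 < n -> n <= m -> (forall q, plp_exp m (u + U_(q))%MM) ->
  exists v w, [/\ u = (v + w)%MM, plp_exp (m - n.-1) v &
                  forall q, plp_exp n.-1 (w + U_(q))%MM].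
Proof.
move=> n_gt1 le_n_m /plp_socP; have mE : n.-1 + (m - n.-1) = m by lia.
rewrite -{1}mE => /(plp_tight_split (leqSpred n))[v [y [xE v_exp y_tight]]].
have yE : y = (y - U_(last) + U_(last))%MM.
  by rewrite submK // lep1mP -lt0n; apply: plp_tight_last_gt0 n_gt1 y_tight.
exists v, (y - U_(last))%MM; split=> //; last by apply/(plp_socP _ _).2; rewrite -yE.
by apply: (@addIm _ U_(last)%MM); rewrite /= -addmA -yE.
Qed.

Lemma plp_exp_of_colon m a : m * d <= mdeg a ->
  (forall q, exists2 x, plp_exp m x & (x <= a + U_(q))%MM) ->
  exists2 y, plp_exp m y & (y <= a)%MM.
Proof.
move=> deg_a cover; have [x x_exp le_x] := cover last.
have [|not_le_xa] := boolP (x <= a)%MM; first by exists x.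
have x_last := lepm_addU_nle le_x not_le_xa.
have x_le i : x i <= a i + (last == i) by move/mnm_lepP/(_ i): le_x; rewrite mnmDE mnm1E.
have [j0 lt_j0|all_ge] := pickP (fun j => x j < a j); last first.
  suff /mdeg_lepm : (a + U_(last) <= x)%MM by rewrite mdegD mdeg1 (plp_exp_mdeg x_exp); lia.
  apply/mnm_lepP => i; rewrite mnmDE mnm1E; have [<-|_] := eqVneq last i.
    by rewrite x_last addn1.
  by have := all_ge i; rewrite /= addn0 ltnNge => /negbFE.
(* Move the surplus of x in the last variable to the last position j where x
   falls short of a; z below a + e_j then bounds the new partial sums. *)
have [j lt_j j_max] := @arg_maxnP _ j0 (fun j => x j < a j) (fun j : 'I_n => j : nat) lt_j0.
have [z z_exp le_z] := cover j.
have z_le i : z i <= a i + (j == i) by move/mnm_lepP/(_ i): le_z; rewrite mnmDE mnm1E.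
have [le_bx|lt_xb] := leqP (m * b j) (x j).
  exists z => //; apply/mnm_lepP => i; have := z_le i; have [<-|_] := eqVneq j i.
    by have := z_exp.1 j; lia.
  by rewrite addn0.
have ne_lj : last != j by apply: contraTneq lt_j => <-; rewrite x_last ltnNge leqnSn.
have le_Ux : (U_(last) <= x + U_(j))%MM by rewrite lep1mP mnmDE x_last.
set y := (x + U_(j) - U_(last))%MM; have yE : (y + U_(last) = x + U_(j))%MM by rewrite submK.
have y_coord i : y i + (last == i) = x i + (j == i).
  by move/mnmP/(_ i): yE; rewrite !mnmDE !mnm1E.
exists y.
  apply: (plp_exp_exchange x_exp z_exp yE).
    by have := y_coord j; rewrite eqxx (negbTE ne_lj); lia.
  move=> i le_ji ne_il; apply: (psum_lt_of_tail (l := last)).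
  - by rewrite !(plp_exp_mdeg z_exp, plp_exp_mdeg x_exp).
  - by rewrite ltn_neqAle leq_last andbT; apply: ne_il.
  - move=> k lt_ik; have ne_jk : j != k by apply: contraTneq lt_ik => <-; rewrite -leqNgt.
    have [lt_xa|] := ltnP (x k) (a k); first by have := j_max k lt_xa; lia.
    by have := z_le k; rewrite (negbTE ne_jk); lia.
  - by have := z_le last; rewrite x_last eq_sym (negbTE ne_lj); lia.
apply/mnm_lepP => i; have := y_coord i; have := x_le i; have [<-|_] := eqVneq j i.
  by rewrite (negbTE ne_lj); lia.
by case: (last == i); lia.
Qed.

End Degree.
End LastVariable.
End PlpExponents.

Section PlpIdeal.
Variables (K : fieldType) (n : nat) (b alpha beta : 'I_n -> nat).
Local Notation I := (plp_ideal (K:=K) b alpha beta).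
Local Notation plp_exp := (plp_exp b alpha beta).

Lemma plp_ideal_monomial u : plp_exp 1 u -> I 'X_[u].
Proof.
move=> [u_le u_psum]; apply: ideal_span_gen; exists u; split=> // i.
  by have := u_le i; rewrite mul1n.
by have := u_psum i; rewrite !mul1n.
Qed.

Lemma plp_pow_monomial m x : plp_exp m x -> ideal_pow I m 'X_[x].
Proof.
elim: m x => [//|m IHm] x /plp_exp_succ_split[y [z [-> y_exp z_exp]]].
by rewrite addmC mpolyXD; apply: ideal_powSM; [apply: IHm | apply: plp_ideal_monomial].
Qed.

Lemma plp_pow_msupp m p : ideal_pow I m p ->
  forall a, a \in msupp p -> exists2 x, plp_exp m x & (x <= a)%MM.
Proof.
have up k a a' : (exists2 x, plp_exp k x & (x <= a)%MM) -> (a <= a')%MM ->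
    exists2 x, plp_exp k x & (x <= a')%MM.
  by move=> [x x_exp le_xa] le_aa'; exists x => //; apply: lepm_trans le_aa'.
elim: m p => [|m IHm] p.
  by move=> _ a _; exists 0%MM; [apply: plp_exp0 | apply/mnm_lepP => i; rewrite mnm0E].
apply: ideal_span_msupp (up m.+1) _ => _ [f [g [If [Ig ->]]]] a /msuppM_le.
move=> /allpairsP[[a1 a2] /= [a1_supp a2_supp ->]].
have [x x_exp le_x] := IHm _ If _ a1_supp.
have [y y_exp le_y] : exists2 y, plp_exp 1 y & (y <= a2)%MM.
  apply: ideal_span_msupp (up 1) _ Ig _ a2_supp => _ [u [u_le u_psum ->]] c.
  rewrite msuppX inE => /eqP ->; exists u; last exact: lepm_refl.
  by split=> i; rewrite ?mul1n //; have := u_psum i; rewrite !mul1n.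
by exists (x + y)%MM; [rewrite -addn1; apply: plp_expD | apply: lepm_add].
Qed.

Lemma plp_pow_mulX m u (q : 'I_n) : ideal_pow I m ('X_q * 'X_[u])%R ->
  exists2 x, plp_exp m x & (x <= u + U_(q))%MM.
Proof.
move/plp_pow_msupp/(_ (U_(q) + u)%MM).
by rewrite -mpolyXD msuppX mem_seq1 eqxx addmC => /(_ isT).
Qed.

Lemma plp_mulX_pow m w (q : 'I_n) : plp_exp m (w + U_(q))%MM ->
  ideal_pow I m ('X_q * 'X_[w])%R.
Proof. by rewrite -mpolyXD addmC; apply: plp_pow_monomial. Qed.

Variables (last : 'I_n) (d : nat).
Hypothesis lastE : last.+1 = n.
Hypothesis alpha_last : alpha last = d.
Hypothesis beta_last : beta last = d.

Lemma plp_soc_exp m u : (mdeg u).+1 = m * d ->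
  (forall q, ideal_pow I m ('X_q * 'X_[u])%R) -> forall q, plp_exp m (u + U_(q))%MM.
Proof.
move=> deg_u in_pow q; have [x x_exp le_x] := plp_pow_mulX (in_pow q).
suff <- : x = (u + U_(q))%MM by [].
apply: lepm_mdeg_eq le_x _.
by rewrite (plp_exp_mdeg lastE alpha_last beta_last x_exp) mdegD mdeg1 addn1.
Qed.

Hypothesis beta_mono : forall i j : 'I_n, i <= j -> beta i <= beta j.
Hypothesis alpha_first : forall i : 'I_n, i = 0 :> nat -> alpha i = 0.

Lemma plp_Soc_star_gen_lt : Soc_star_gen_lt I d n.
Proof.
move=> m le_n_m f soc_f; apply: ideal_span_trans soc_f => _ [u [deg_u [in_pow ->]]].
have soc_u := plp_soc_exp deg_u in_pow.
have n_gt1 := plp_soc_n_gt1 lastE alpha_last beta_last alpha_first soc_u.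
have [v [w [-> v_exp soc_w]]] :=
  plp_soc_split lastE alpha_last beta_last beta_mono n_gt1 le_n_m soc_u.
apply: ideal_span_gen; exists n.-1; split; [lia | lia |].
rewrite mpolyXD; apply: ideal_span_gen; exists 'X_[v], 'X_[w].
split; first exact: plp_pow_monomial.
split=> //; apply: ideal_span_gen; exists w; split; last by split=> // i; apply: plp_mulX_pow.
by have := plp_exp_mdeg lastE alpha_last beta_last (soc_w last); rewrite mdegD mdeg1 addn1.
Qed.

Lemma plp_Soc_gen_lt : Soc_gen_lt I n.
Proof.
move=> m le_n_m f colon_f; rewrite (mpolyE f); apply: ideal_span_sum => a a_supp.
rewrite -mul_mpolyC; apply: ideal_spanMl.
have cover q : exists2 x, plp_exp m x & (x <= a + U_(q))%MM.
  have q_supp : (U_(q) + a)%MM \in msupp ('X_q * f)%R.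
    by rewrite mcoeff_msupp mulrC mcoeffMX -mcoeff_msupp.
  by rewrite addmC; apply: plp_pow_msupp (colon_f q) _ q_supp.
have [le_deg|lt_deg] := leqP (m * d) (mdeg a).
  have [y y_exp le_ya] := plp_exp_of_colon lastE alpha_last beta_last le_deg cover.
  apply: ideal_span_gen; left; rewrite -(submK le_ya) mpolyXD.
  exact/ideal_powMl/plp_pow_monomial.
have soc_a q : plp_exp m (a + U_(q))%MM.
  have [x x_exp le_x] := cover q; suff <- : x = (a + U_(q))%MM by [].
  apply: (lepm_mdeg_eq le_x); have := mdeg_lepm le_x.
  by rewrite (plp_exp_mdeg lastE alpha_last beta_last x_exp) mdegD mdeg1; lia.
have n_gt1 := plp_soc_n_gt1 lastE alpha_last beta_last alpha_first soc_a.
have [v [w [-> v_exp soc_w]]] :=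
  plp_soc_split lastE alpha_last beta_last beta_mono n_gt1 le_n_m soc_a.
apply: ideal_span_gen; right; exists n.-1; split; first lia.
rewrite mpolyXD; apply: ideal_span_gen; exists 'X_[v], 'X_[w].
by split; [apply: plp_pow_monomial | split=> // i; apply: plp_mulX_pow].
Qed.

End PlpIdeal.

Theorem theorem3p7 (K : fieldType) (n : nat) (b alpha beta : 'I_n -> nat) (d : nat)
  (hn : (0 < n)%N)
  (halpha_mono : forall i j : 'I_n, (i <= j)%N -> (alpha i <= alpha j)%N)
  (hbeta_mono : forall i j : 'I_n, (i <= j)%N -> (beta i <= beta j)%N)
  (halpha_n : forall i : 'I_n, (i : nat).+1 = n -> alpha i = d)
  (hbeta_n : forall i : 'I_n, (i : nat).+1 = n -> beta i = d)
  (hab : forall i : 'I_n, (alpha i <= beta i)%N)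
  (halpha_1 : forall i : 'I_n, (i : nat) = 0%N -> alpha i = 0%N)
  (hbeta_1 : forall i : 'I_n, (i : nat) = 0%N -> beta i = b i) :
  Soc_star_gen_lt (plp_ideal (K:=K) b alpha beta) d n /\
  Soc_gen_lt (plp_ideal (K:=K) b alpha beta) n.
Proof.
have lt_last : n.-1 < n by rewrite ltn_predL.
pose last : 'I_n := Ordinal lt_last.
have lastE : last.+1 = n by rewrite /= prednK.
have alpha_last := halpha_n last lastE; have beta_last := hbeta_n last lastE.
split; first exact: plp_Soc_star_gen_lt lastE alpha_last beta_last hbeta_mono halpha_1.
exact: plp_Soc_gen_lt lastE alpha_last beta_last hbeta_mono halpha_1.
Qed.
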